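(* Let $\gamma,h>0$, $z,\tilde z\in\mathbb{R}^{2d}$, $n\ge1$, write $\Delta z=\tilde z-z=(\Delta x,\Delta v)$, and let $y_k=(u_k,w_k)$, $k\in\{0,\dots,n\}$, be the optimized trajectory. Then for all $k\in\{0,\dots,n\}$, \[ |u_k|\le|\Delta x|+\frac{he^{-\gamma h/2}}{1-e^{-\gamma h}}(1-e^{-\gamma hn})|\Delta v|\le 2\left(1+\frac{hn}{2+\gamma hn}\right)|\Delta z|. \]
   Context: Let $A_h=\begin{pmatrix} I_d & he^{-\gamma h/2}I_d\\ 0 & e^{-\gamma h}I_d\end{pmatrix}$, $L_h=(1-e^{-\gamma h})^{1/2}\begin{pmatrix} hI_d & 0\\ e^{-\gamma h/2}I_d & I_d\end{pmatrix}$, $\Sigma_{h,n}=\sum_{k=1}^n A_h^{n-k}L_hL_h^T(A_h^T)^{n-k}$, $\Delta z=\tilde z-z$, and $E_k=L_h^T(A_h^T)^{n-k}\Sigma_{h,n}^{-1}A_h^n\Delta z$ for $k=1,\dots,n$. The optimized trajectory is $y_0=\Delta z$, $y_{k+1}=A_hy_k-L_hE_{k+1}$ for $k=0,\dots,n-1$, with $y_k=(u_k,w_k)\in\mathbb{R}^d\times\mathbb{R}^d$ (position and velocity components). *)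

From HB Require Import structures.
From mathcomp Require Import all_boot all_order all_algebra.
From mathcomp Require Import all_classical all_reals all_analysis.
Set Implicit Arguments. Unset Strict Implicit. Unset Printing Implicit Defensive.
Import Order.TTheory GRing.Theory Num.Theory.
Local Open Scope ring_scope.

Section Defs.
Variables (R : realType) (d : nat) (gamma h : R).

Definition vnorm m (v : 'cV[R]_m) : R := Num.sqrt (\sum_i (v i 0) ^+ 2).

(* matrix power A^k (the block dimension d+d is not syntactically a successor) *)
Definition mxpow m (A : 'M[R]_m) (k : nat) : 'M[R]_m := iter k (mulmx A) 1%:M.

Definition Ah : 'M[R]_(d + d) :=
  block_mx 1%:M ((h * expR (- gamma * h / 2))%:M)
           0 ((expR (- gamma * h))%:M).

Definition Lh : 'M[R]_(d + d) :=
  Num.sqrt (1 - expR (- gamma * h)) *: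
  block_mx (h%:M) 0 ((expR (- gamma * h / 2))%:M) 1%:M.

Definition Sigma (n : nat) : 'M[R]_(d + d) :=
  \sum_(1 <= k < n.+1)
     mxpow Ah (n - k) *m Lh *m Lh^T *m mxpow Ah^T (n - k).

Definition Ek (n : nat) (Dz : 'cV[R]_(d + d)) (k : nat) : 'cV[R]_(d + d) :=
  Lh^T *m mxpow Ah^T (n - k) *m invmx (Sigma n) *m mxpow Ah n *m Dz.

Fixpoint traj (n : nat) (Dz : 'cV[R]_(d + d)) (k : nat) : 'cV[R]_(d + d) :=
  match k with
  | 0 => Dz
  | k'.+1 => Ah *m traj n Dz k' - Lh *m Ek n Dz k'.+1
  end.

Definition upos (y : 'cV[R]_(d + d)) : 'cV[R]_d := usubmx y.
Definition wvel (y : 'cV[R]_(d + d)) : 'cV[R]_d := dsubmx y.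

End Defs.

(* Write b = e^(-gamma h) and a = e^(-gamma h / 2).  All d x d blocks of A_h,
   L_h L_h^T and Sigma_{h,k} are scalar, so the recursion
   Sigma_{k+1} = A Sigma_k A^T + L L^T and the definition of E_k give
   y_k = A^k dz - Sigma_k (A^T)^(n-k) Sigma_n^-1 A^n dz in closed form, and
   u_k = p dx + kap q dv with kap = h a / (1 - b) and p, q explicit rational
   functions of x = b^k, y = b^(n-k) and rho = (1 - b^2) / b = 2 sinh (gamma h).
   Since (1 - b^m) / (1 + b^m) = tanh (m gamma h / 2) <= m gamma h / 2 < m rho / 4,
   polynomial identities with nonnegative terms give |p| <= 1 and
   |q| <= 1 - b^n.  The second inequality combines tanh (t/2) <= t/2 at
   t = gamma h n with kap <= 1 / gamma, which is gamma h / 2 <= sinh (gamma h / 2). *)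

From HB Require Import structures.
From mathcomp Require Import all_boot all_order all_algebra.
From mathcomp Require Import all_classical all_reals all_analysis.
From mathcomp Require Import ring lra.
Import Order.TTheory GRing.Theory Num.Theory.
Local Open Scope ring_scope.

Section ScalarBlocks.
Variables (R : comRingType) (d : nat).

Definition sblk (p q r s : R) : 'M[R]_(d + d) := block_mx p%:M q%:M r%:M s%:M.

Lemma mul_sblk p q r s p' q' r' s' :
  sblk p q r s *m sblk p' q' r' s' =
  sblk (p * p' + q * r') (p * q' + q * s') (r * p' + s * r') (r * q' + s * s').
Proof. by rewrite /sblk mulmx_block -!scalar_mxM -!raddfD. Qed.

Lemma tr_sblk p q r s : (sblk p q r s)^T = sblk p r q s.
Proof. by rewrite /sblk tr_block_mx !tr_scalar_mx. Qed.

Lemma add_sblk p q r s p' q' r' s' :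
  sblk p q r s + sblk p' q' r' s' = sblk (p + p') (q + q') (r + r') (s + s').
Proof. by rewrite /sblk add_block_mx -!raddfD. Qed.

Lemma sub_sblk p q r s p' q' r' s' :
  sblk p q r s - sblk p' q' r' s' = sblk (p - p') (q - q') (r - r') (s - s').
Proof. by rewrite /sblk opp_block_mx add_block_mx -!raddfN -!raddfD. Qed.

Lemma sblk0 : sblk 0 0 0 0 = 0.
Proof. by rewrite /sblk !raddf0 block_mx0. Qed.

Lemma sblk1 : sblk 1 0 0 1 = 1%:M.
Proof. by rewrite /sblk (raddf0 (@scalar_mx R d)) -scalar_mx_block. Qed.

Lemma usubmx_mul_sblk p q r s (v : 'cV[R]_(d + d)) :
  usubmx (sblk p q r s *m v) = p *: usubmx v + q *: dsubmx v.
Proof. by rewrite -{1}(vsubmxK v) mul_block_col col_mxKu !mul_scalar_mx. Qed.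

End ScalarBlocks.
Arguments sblk {R} d.

Lemma invmx_sblk (F : fieldType) d (p q r s : F) : p * s - q * r != 0 ->
  invmx (sblk d p q r s) =
  sblk d (s / (p * s - q * r)) (- q / (p * s - q * r))
         (- r / (p * s - q * r)) (p / (p * s - q * r)).
Proof.
set det := p * s - q * r => det_neq0; set N := sblk d (s / det) _ _ _.
have MN : sblk d p q r s *m N = 1%:M.
  by rewrite mul_sblk -sblk1; congr sblk; rewrite /det; field.
have [unitM _] := mulmx1_unit MN.
by rewrite -[RHS]mul1mx -(mulVmx unitM) -mulmxA MN mulmx1.
Qed.

Section EuclideanNorm.
Context {R : realType}.

Lemma vnorm_ge0 {m} (u : 'cV[R]_m) : 0 <= vnorm u.
Proof. exact: sqrtr_ge0. Qed.

Lemma sqr_vnorm {m} (u : 'cV[R]_m) : vnorm u ^+ 2 = \sum_i u i 0 ^+ 2.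
Proof. by rewrite sqr_sqrtr // sumr_ge0 // => i _; exact: sqr_ge0. Qed.

Lemma vnormZ {m} (c : R) (u : 'cV[R]_m) : vnorm (c *: u) = `|c| * vnorm u.
Proof.
rewrite /vnorm -sqrtr_sqr -sqrtrM ?sqr_ge0 // mulr_sumr.
by congr Num.sqrt; apply: eq_bigr => i _; rewrite mxE exprMn.
Qed.

Lemma lagrange_identity {m} (u w : 'cV[R]_m) :
  \sum_i \sum_j (u i 0 * w j 0 - u j 0 * w i 0) ^+ 2 =
  2 * ((\sum_i u i 0 ^+ 2) * (\sum_j w j 0 ^+ 2) - (\sum_i u i 0 * w i 0) ^+ 2).
Proof.
have expand i j : (u i 0 * w j 0 - u j 0 * w i 0) ^+ 2 =
    u i 0 ^+ 2 * w j 0 ^+ 2 + u j 0 ^+ 2 * w i 0 ^+ 2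
    - 2 * (u i 0 * w i 0 * (u j 0 * w j 0)) by ring.
under eq_bigr do under eq_bigr do rewrite expand.
under eq_bigr do rewrite sumrB big_split /=.
rewrite sumrB big_split /= [X in _ + X - _]exchange_big /=.
rewrite expr2 !big_distrlr /=.
under [X in _ - X]eq_bigr do rewrite -mulr_sumr.
by rewrite -mulr_sumr; ring.
Qed.

Lemma cauchy_schwarz {m} (u w : 'cV[R]_m) :
  \sum_i u i 0 * w i 0 <= vnorm u * vnorm w.
Proof.
apply: le_trans (ler_norm _) _.
rewrite -ler_sqr ?nnegrE ?mulr_ge0 ?vnorm_ge0 // real_normK ?num_real // exprMn !sqr_vnorm.
rewrite -subr_ge0 -(@pmulr_rge0 _ 2) // -lagrange_identity.
by do 2![apply: sumr_ge0 => ? _]; exact: sqr_ge0.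
Qed.

Lemma ler_vnormD {m} (u w : 'cV[R]_m) : vnorm (u + w) <= vnorm u + vnorm w.
Proof.
rewrite -ler_sqr ?nnegrE ?addr_ge0 ?vnorm_ge0 // sqr_vnorm.
have -> : \sum_i (u + w) i 0 ^+ 2 =
    vnorm u ^+ 2 + 2 * \sum_i u i 0 * w i 0 + vnorm w ^+ 2.
  rewrite !sqr_vnorm mulr_sumr -!big_split /=; apply: eq_bigr => i _; rewrite mxE; ring.
have := cauchy_schwarz u w; rewrite sqrrD; lra.
Qed.

Lemma vnorm_upos_le {d} (v : 'cV[R]_(d + d)) : vnorm (upos v) <= vnorm v.
Proof.
rewrite ler_sqrt ?sumr_ge0 // => [|i _]; last exact: sqr_ge0.
rewrite big_split_ord /=; apply: ler_wpDr; first by apply: sumr_ge0 => i _; exact: sqr_ge0.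
by apply: ler_sum => i _; rewrite mxE.
Qed.

Lemma vnorm_wvel_le {d} (v : 'cV[R]_(d + d)) : vnorm (wvel v) <= vnorm v.
Proof.
rewrite ler_sqrt ?sumr_ge0 // => [|i _]; last exact: sqr_ge0.
rewrite big_split_ord /=; apply: ler_wpDl; first by apply: sumr_ge0 => i _; exact: sqr_ge0.
by apply: ler_sum => i _; rewrite mxE.
Qed.

End EuclideanNorm.

Section ExpInequalities.
Import numFieldNormedType.Exports.
Local Open Scope classical_set_scope.
Context {R : realType}.

Lemma ger0_is_derive_le {f df : R -> R} {s : R} : 0 <= s ->
  (forall x, is_derive x (1 : R) f (df x)) -> (forall x, 0 <= x -> 0 <= df x) ->
  f 0 <= f s.
Proof.
move=> s_ge0 f_df df_ge0.
have f_cont : {within `[0, s], continuous f}.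
  apply: continuous_subspaceT => x; apply: differentiable_continuous.
  by apply/derivable1_diffP; case: (f_df x).
rewrite -subr_ge0.
have [c c_in ->] := MVT_segment s_ge0 (fun x _ => f_df x) f_cont.
rewrite mulr_ge0 ?subr0 // df_ge0 //.
by move: c_in; rewrite in_itv /= => /andP[].
Qed.

(* [s <= sinh s], multiplied by [2 e^-s] *)
Lemma sinh_ge (s : R) : 0 <= s -> 2 * s * expR (- s) <= 1 - expR (- s) ^+ 2.
Proof.
move=> s_ge0.
pose f := expR * expR - cst 1 - ( *%R 2) * expR : R -> R.
pose df (x : R) := 2 * expR x * (expR x - 1 - x).
have f_df x : is_derive x (1 : R) f (df x).
  by apply: is_derive_eq; rewrite /df /= -![_ *: _]/(_ * _); ring.
have df_ge0 x : 0 <= x -> 0 <= df x.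
  move=> _; rewrite mulr_ge0 ?mulr_ge0 ?expR_ge0 //.
  by have := expR_ge1Dx x; lra.
have := ger0_is_derive_le s_ge0 f_df df_ge0.
have fE x : f x = expR x * expR x - 1 - 2 * x * expR x by [].
rewrite !fE expR0 mulr0 mul0r mulr1 !subrr subr_ge0 => f_le.
rewrite expRN; have e_gt0 := expR_gt0 s; set e := expR s in f_le e_gt0 *.
have e_neq0 : e != 0 by rewrite gt_eqF.
rewrite -(ler_pM2r (exprn_gt0 2 e_gt0)).
rewrite (_ : _ / e * _ = 2 * s * e); last by field.
by rewrite (_ : _ * e ^+ 2 = e * e - 1) //; field.
Qed.

(* [tanh (s/2) <= s/2] with the denominator cleared *)
Lemma tanh_half_le (s : R) : 0 <= s ->
  2 * (1 - expR (- s)) <= s * (1 + expR (- s)).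
Proof.
move=> s_ge0.
pose f := cst 2 + id - (cst 2 - id) * expR : R -> R.
pose df (x : R) := 1 - (1 - x) * expR x.
have f_df x : is_derive x (1 : R) f (df x).
  apply: is_derive_eq; rewrite /df /= -![_ *: _]/(_ * _).
  by rewrite (_ : (cst 2 - id) x = 2 - x :> R) //; ring.
have df_ge0 x : 0 <= x -> 0 <= df x.
  move=> _; have := expR_ge1Dx (- x); rewrite expRN subr_ge0 => expRN_ge.
  have e_gt0 := expR_gt0 x.
  by rewrite -[leRHS](mulVf (lt0r_neq0 e_gt0)) ler_pM2r //; lra.
have := ger0_is_derive_le s_ge0 f_df df_ge0.
have fE x : f x = 2 + x - (2 - x) * expR x by [].
rewrite !fE expR0 subr0 addr0 mulr1 subrr subr_ge0 => f_le.
rewrite expRN; have e_gt0 := expR_gt0 s; set e := expR s in f_le e_gt0 *.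
have e_neq0 : e != 0 by rewrite gt_eqF.
rewrite -(ler_pM2r e_gt0) (_ : 2 * _ * e = 2 * e - 2); last by field.
by rewrite (_ : s * (1 + e^-1) * e = s * e + s); [lra | field].
Qed.

End ExpInequalities.

Section TrajectoryCoefficients.
Context {R : realFieldType}.
Implicit Types x y r s : R.

(* For [x = b^k], [y = b^(n-k)], [r = k rho], [s = (n-k) rho], the position
   [u_k] is [pos_coef * dx + kap * vel_coef * dv] (see [upos_traj]). *)
Definition coef_gap x y r s := (r + s) * (1 + x * y) - 4 * (1 - x * y).

Definition pos_coef x y r s :=
  (s * (1 + x * y) - 4 * (1 - x * y) + 2 * (1 - x) * (1 + y)) / coef_gap x y r s.

Definition vel_coef_num x y r s :=
  s * (1 - x) * (1 - x * y * y) - r * x * (1 - y) ^+ 2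
  - 2 * (1 - x * y) * (1 - x) * (1 - y).

Definition vel_coef x y r s :=
  vel_coef_num x y r s / ((1 - x * y) * coef_gap x y r s).

Variables x y r s : R.
Hypotheses (x_gt0 : 0 < x) (x_le1 : x <= 1) (y_gt0 : 0 < y) (y_le1 : y <= 1).
Hypotheses (r_ge : 4 * (1 - x) <= r * (1 + x)) (s_ge : 4 * (1 - y) <= s * (1 + y)).

Let gap := coef_gap x y r s.
Let ex := r * (1 + x) - 4 * (1 - x).
Let ey := s * (1 + y) - 4 * (1 - y).

Let xy_ge0 : 0 <= x * y. Proof. by rewrite mulr_ge0 ?ltW. Qed.
Let x_ge0 : 0 <= x. Proof. exact: ltW. Qed.
Let y_ge0 : 0 <= y. Proof. exact: ltW. Qed.
Let omx_ge0 : 0 <= 1 - x. Proof. by rewrite subr_ge0. Qed.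
Let omy_ge0 : 0 <= 1 - y. Proof. by rewrite subr_ge0. Qed.
Let xy_le1 : x * y <= 1. Proof. by rewrite mulr_ile1 // ltW. Qed.
Let omxy_ge0 : 0 <= 1 - x * y. Proof. by rewrite subr_ge0. Qed.
Let omxyy_ge0 : 0 <= 1 - x * y * y.
Proof. by rewrite subr_ge0 mulr_ile1 // ltW. Qed.
Let ex_ge0 : 0 <= ex. Proof. by rewrite subr_ge0. Qed.
Let ey_ge0 : 0 <= ey. Proof. by rewrite subr_ge0. Qed.
Let opxopy_gt0 : 0 < (1 + x) * (1 + y). Proof. by rewrite mulr_gt0 ?addr_gt0. Qed.

Local Ltac nonneg :=
  repeat first [ assumption | exact: ler01 | exact: ler0n | exact: sqr_ge0
               | apply: mulr_ge0 | apply: addr_ge0 ].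

Lemma norm_pos_coef_le1 : 0 < gap -> `|pos_coef x y r s| <= 1.
Proof.
rewrite /pos_coef -/gap => gap_gt0; set num := _ + _ * (1 + y).
have num_ge0 : 0 <= num.
  have : 0 <= (1 + y) * num.
    rewrite (_ : _ * num = (1 + x * y) * ey + 2 * (1 - x) * (1 - y) ^+ 2); last first.
      by rewrite /num /ey; ring.
    by nonneg.
  by rewrite pmulr_rge0 // addr_gt0.
have num_le : num <= gap.
  have : 0 <= (1 + x) * (gap - num).
    rewrite (_ : _ * _ = (1 + x * y) * ex + 2 * (1 - x) ^+ 2 * (1 - y)); last first.
      by rewrite /num /ex /gap /coef_gap; ring.
    by nonneg.
  by rewrite pmulr_rge0 ?subr_ge0 // addr_gt0.
by rewrite ger0_norm ?divr_ge0 ?ler_pdivrMr ?mul1r // ltW.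
Qed.

Lemma vel_coef_num_le : vel_coef_num x y r s <= (1 - x * y) ^+ 2 * gap.
Proof.
have A_ge0 : 0 <= (1 - x * y) ^+ 2 * (1 + x * y) - (1 - x) * (1 - x * y * y).
  rewrite (_ : _ - _ = x * ((1 - y) ^+ 2 * (1 + y)
                          + y ^+ 2 * (1 - x) * ((1 - y) + (1 - x * y)))); last by ring.
  by nonneg.
have C_ge0 : 0 <= 4 * (1 - x * y) ^+ 2 - 2 * ((1 - x) * (1 - y)).
  have : (1 - x) * (1 - y) <= (1 - x * y) ^+ 2.
    by rewrite expr2 ler_pM // lerD2l lerN2 ?ler_piMr ?ler_piMl // ltW.
  by have := sqr_ge0 (1 - x * y); lra.
rewrite -subr_ge0 -(pmulr_rge0 _ opxopy_gt0).
rewrite (_ : (1 + x) * (1 + y) * _ =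
    (1 + x) * ((1 - x * y) ^+ 2 * (1 + x * y) - (1 - x) * (1 - x * y * y)) * ey
  + (1 + y) * ((1 - x * y) ^+ 2 * (1 + x * y) + x * (1 - y) ^+ 2) * ex
  + (1 - x) * (1 - y) * (1 - x * y)
      * (4 * (1 - x * y) ^+ 2 - 2 * ((1 - x) * (1 - y)))); last first.
  by rewrite /ex /ey /gap /coef_gap /vel_coef_num; ring.
by nonneg.
Qed.

Lemma vel_coef_num_ge : - ((1 - x * y) ^+ 2 * gap) <= vel_coef_num x y r s.
Proof.
have B_ge0 : 0 <= (1 - x * y) ^+ 2 * (1 + x * y) - x * (1 - y) ^+ 2.
  rewrite (_ : _ - _ = (1 - x) * (1 - x * y * y) + x * y * (1 - x * y) ^+ 2).
    by nonneg.
  by ring.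
rewrite -subr_ge0 opprK -(pmulr_rge0 _ opxopy_gt0).
rewrite (_ : (1 + x) * (1 + y) * _ =
    (1 + x) * ((1 - x * y) ^+ 2 * (1 + x * y) + (1 - x) * (1 - x * y * y)) * ey
  + (1 + y) * ((1 - x * y) ^+ 2 * (1 + x * y) - x * (1 - y) ^+ 2) * ex
  + (1 - x) * (1 - y)
      * (4 * (1 - x * y) ^+ 3 + 2 * (1 - x) * (1 - y) * (1 - x * y))); last first.
  by rewrite /ex /ey /gap /coef_gap /vel_coef_num; ring.
by nonneg; exact: exprn_ge0.
Qed.

Lemma norm_vel_coef_le : x * y < 1 -> 0 < gap ->
  `|vel_coef x y r s| <= 1 - x * y.
Proof.
rewrite /vel_coef -/gap => xy_lt1 gap_gt0.
have den_gt0 : 0 < (1 - x * y) * gap by rewrite mulr_gt0 // subr_gt0.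
rewrite normrM normfV (gtr0_norm den_gt0) ler_pdivrMr // ler_norml.
by rewrite mulrA -expr2 vel_coef_num_le andbT vel_coef_num_ge.
Qed.
End TrajectoryCoefficients.

Section MatrixPowers.
Variables (R : realType) (m : nat).

Lemma mxpowS (M : 'M[R]_m) k : mxpow M k.+1 = M *m mxpow M k.
Proof. by []. Qed.

Lemma mxpowSr (M : 'M[R]_m) k : mxpow M k.+1 = mxpow M k *m M.
Proof.
elim: k => [|k IHk]; first by rewrite mxpowS mul1mx mulmx1.
by rewrite mxpowS {1}IHk mulmxA.
Qed.

Lemma mxpow_tr (M : 'M[R]_m) k : mxpow M^T k = (mxpow M k)^T.
Proof.
elim: k => [|k IHk]; first by rewrite trmx1.
by rewrite mxpowS mxpowSr IHk trmx_mul.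
Qed.

End MatrixPowers.

Section OptimizedTrajectory.
Variables (R : realType) (d : nat) (gamma h : R).
Local Notation A := (Ah d gamma h).
Local Notation L := (Lh d gamma h).
Local Notation Sigma := (Sigma d gamma h).

Lemma SigmaS k : Sigma k.+1 = A *m Sigma k *m A^T + L *m L^T.
Proof.
rewrite /Sigma big_nat_recr //= subnn mulmx1 mul1mx; congr (_ + _).
rewrite mulmx_sumr mulmx_suml; apply: eq_big_nat => j /andP[_ j_le].
by rewrite subSn // mxpowS mxpowSr !mulmxA.
Qed.

Lemma traj_closed_form n (Dz : 'cV[R]_(d + d)) k : (k <= n)%N ->
  traj gamma h n Dz k = mxpow A k *m Dz
    - Sigma k *m mxpow A^T (n - k) *m (invmx (Sigma n) *m mxpow A n *m Dz).
Proof.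
elim: k => [|k IHk] k_le_n.
  by rewrite /= /Sigma big_geq // !mul0mx subr0 mul1mx.
rewrite /= IHk ?(ltnW k_le_n) // /Ek -(subnSK k_le_n) SigmaS !mxpowS.
by rewrite mulmxBr !mulmxA !mulmxDl opprD addrA.
Qed.

End OptimizedTrajectory.

Section PositionBound.
Variables (R : realType) (d : nat) (gamma h : R).
Hypotheses (gamma_gt0 : 0 < gamma) (h_gt0 : 0 < h).
Local Notation A := (Ah d gamma h).
Local Notation L := (Lh d gamma h).
Local Notation Sigma := (Sigma d gamma h).

Let a := expR (- gamma * h / 2).
Local Notation b := (a ^+ 2).
Let kap := h * a / (1 - b).
Let rho := (1 - b ^+ 2) / b.

Lemma expR_gamma_h : expR (- gamma * h) = b.
Proof. by rewrite expr2 -expRD; congr expR; field. Qed.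

Let a_gt0 : 0 < a. Proof. exact: expR_gt0. Qed.
Let b_gt0 : 0 < b. Proof. exact: exprn_gt0. Qed.
Let b_lt1 : b < 1.
Proof. by rewrite -expR_gamma_h expR_lt1 mulNr oppr_lt0 mulr_gt0. Qed.
Let bX_gt0 m : 0 < b ^+ m. Proof. exact: exprn_gt0. Qed.
Let ghn_ge0 m : 0 <= gamma * h * m%:R.
Proof. by rewrite mulr_ge0 ?ler0n // mulr_ge0 // ltW. Qed.
Let a_neq0 : a != 0. Proof. exact: lt0r_neq0. Qed.
Let h_neq0 : h != 0. Proof. exact: lt0r_neq0. Qed.
Let omb_neq0 : 1 - b != 0. Proof. by rewrite subr_eq0 eq_sym lt_eqF. Qed.

Local Ltac field_ab := field; rewrite ?a_neq0 ?h_neq0 ?omb_neq0.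

Lemma Ah_sblk : A = sblk d 1 (h * a) 0 b.
Proof.
rewrite /Ah /sblk expR_gamma_h (raddf0 (@scalar_mx R d)).
by congr (block_mx _ _ _ _); congr (scalar_mx (_ * expR _)); field.
Qed.

Lemma Lh_sblk (c := Num.sqrt (1 - b)) : L = sblk d (c * h) 0 (c * a) c.
Proof.
rewrite /Lh /sblk expR_gamma_h scale_block_mx !scale_scalar_mx scaler0 mulr1.
by rewrite (raddf0 (@scalar_mx R d)).
Qed.

Lemma mulmx_Lh_trmx : L *m L^T =
  sblk d ((1 - b) * h ^+ 2) ((1 - b) * h * a) ((1 - b) * h * a) ((1 - b) * (1 + b)).
Proof.
rewrite Lh_sblk tr_sblk mul_sblk; set c := Num.sqrt _.
have c_sqr : c ^+ 2 = 1 - b by rewrite sqr_sqrtr // subr_ge0 ltW.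
by congr sblk; rewrite -c_sqr; ring.
Qed.

Lemma mxpow_Ah m : mxpow A m = sblk d 1 (kap * (1 - b ^+ m)) 0 (b ^+ m).
Proof.
elim: m => [|m IHm]; first by rewrite expr0 subrr mulr0 sblk1.
by rewrite mxpowS IHm Ah_sblk mul_sblk; congr sblk; rewrite /kap ?exprS; field_ab.
Qed.

Let sig11 k := kap ^+ 2 * (k%:R * rho - (1 - b ^+ k) * (3 - b ^+ k)).
Let sig12 k := kap * (1 - b ^+ k) ^+ 2.
Let sig22 k := 1 - b ^+ k ^+ 2.

Lemma Sigma_sblk k : Sigma k = sblk d (sig11 k) (sig12 k) (sig12 k) (sig22 k).
Proof.
elim: k => [|k IHk].
  by rewrite /Sigma big_geq // -sblk0; congr sblk; rewrite /sig11 /sig12 /sig22; ring.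
rewrite SigmaS IHk Ah_sblk tr_sblk mulmx_Lh_trmx !mul_sblk add_sblk.
by congr sblk; rewrite /sig11 /sig12 /sig22 /kap /rho ?exprS -?natr1; field_ab.
Qed.

Lemma gamma_h_a_le : gamma * h * a <= 1 - b.
Proof.
have := sinh_ge (gamma * h / 2) _; rewrite -!mulNr -/a.
rewrite (_ : 2 * (gamma * h / 2) = gamma * h); last by field.
by apply; rewrite ltW ?divr_gt0 ?mulr_gt0.
Qed.

Lemma rho_gt : 2 * (gamma * h) < rho.
Proof.
have a_lt1 : a < 1 by rewrite expR_lt1 !mulNr oppr_lt0 divr_gt0 ?mulr_gt0.
have two_a_lt : 2 * a < 1 + b.
  by rewrite -subr_gt0 (_ : _ - _ = (1 - a) ^+ 2); [rewrite exprn_gt0 ?subr_gt0 | ring].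
have gha_gt0 : 0 < gamma * h * a by rewrite !mulr_gt0.
have := gamma_h_a_le; rewrite /rho ltr_pdivlMr //; nra.
Qed.

Lemma one_sub_bX_le m : 2 * (1 - b ^+ m) <= gamma * h * m%:R * (1 + b ^+ m).
Proof.
have := tanh_half_le (gamma * h * m%:R) _.
by rewrite -!mulNr expRM_natr expR_gamma_h; apply.
Qed.

(* [rho = 2 sinh (gamma h)] and [(1 - b^m) / (1 + b^m) = tanh (m gamma h / 2)] *)
Lemma one_sub_bX_le_rho m : 4 * (1 - b ^+ m) <= m%:R * rho * (1 + b ^+ m).
Proof.
have := one_sub_bX_le m; have := rho_gt.
have : 0 <= m%:R * (1 + b ^+ m) :> R by rewrite mulr_ge0 // addr_ge0 // ltW.
nra.
Qed.

Lemma one_sub_bX_lt_rho m : (0 < m)%N -> 4 * (1 - b ^+ m) < m%:R * rho * (1 + b ^+ m).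
Proof.
move=> m_gt0; have := one_sub_bX_le m; have := rho_gt.
have : 0 < m%:R * (1 + b ^+ m) :> R by rewrite mulr_gt0 ?ltr0n // addr_gt0.
nra.
Qed.

Let x k := b ^+ k.
Let y n k := b ^+ (n - k).
Let gap n k := coef_gap (x k) (y n k) (k%:R * rho) ((n - k)%:R * rho).

Let xy_eq {n k} : (k <= n)%N -> x k * y n k = b ^+ n.
Proof. by move=> k_le_n; rewrite -exprD subnKC. Qed.

Lemma gap_gt0 {n k} : (0 < n)%N -> (k <= n)%N -> 0 < gap n k.
Proof.
move=> n_gt0 k_le_n; rewrite /gap /coef_gap xy_eq // -mulrDl -natrD subnKC //.
by rewrite subr_gt0 one_sub_bX_lt_rho.
Qed.

Lemma Sigma_det {n k} : (k <= n)%N ->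
  sig11 n * sig22 n - sig12 n * sig12 n =
  kap ^+ 2 * (1 - x k * y n k) * gap n k.
Proof.
move=> k_le_n; rewrite /sig11 /sig12 /sig22 /gap /coef_gap /x /y.
by rewrite -[in LHS](subnKC k_le_n) exprD natrD; ring.
Qed.

Lemma upos_traj n (Dz : 'cV[R]_(d + d)) k : (0 < n)%N -> (k <= n)%N ->
  upos (traj gamma h n Dz k) =
  pos_coef (x k) (y n k) (k%:R * rho) ((n - k)%:R * rho) *: upos Dz
  + (kap * vel_coef (x k) (y n k) (k%:R * rho) ((n - k)%:R * rho)) *: wvel Dz.
Proof.
move=> n_gt0 k_le_n.
have gap_neq0 : gap n k != 0 by rewrite lt0r_neq0 ?gap_gt0.
have xy_neq1 : 1 - x k * y n k != 0.
  by rewrite xy_eq // subr_eq0 eq_sym lt_eqF // exprn_ilt1 ?ltW // -lt0n.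
have kap_neq0 : kap != 0 by rewrite !mulf_neq0 // invr_eq0.
have det_neq0 : sig11 n * sig22 n - sig12 n * sig12 n != 0.
  by rewrite (Sigma_det k_le_n) mulf_neq0 // mulf_neq0 // expf_neq0.
rewrite traj_closed_form // (Sigma_sblk n) invmx_sblk // mxpow_tr !mxpow_Ah tr_sblk.
rewrite !Sigma_sblk !mulmxA -mulmxBl !mul_sblk sub_sblk /upos /wvel usubmx_mul_sblk.
rewrite (Sigma_det k_le_n) /pos_coef /vel_coef /vel_coef_num /sig11 /sig12 /sig22.
rewrite -/(x k) -/(y n k) -(xy_eq k_le_n).
have -> : n%:R = k%:R + (n - k)%:R :> R by rewrite -natrD subnKC.
rewrite /gap /coef_gap in gap_neq0 *.
by congr (_ *: _ + _ *: _); field; rewrite gap_neq0 xy_neq1 kap_neq0.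
Qed.

Let kap_gt0 : 0 < kap. Proof. by rewrite !mulr_gt0 // invr_gt0 subr_gt0. Qed.
Let bX_le1 m : b ^+ m <= 1. Proof. by rewrite exprn_ile1 // ltW. Qed.

Lemma upos_traj_le n (Dz : 'cV[R]_(d + d)) k : (0 < n)%N -> (k <= n)%N ->
  vnorm (upos (traj gamma h n Dz k))
    <= vnorm (upos Dz) + kap * (1 - b ^+ n) * vnorm (wvel Dz).
Proof.
move=> n_gt0 k_le_n; rewrite upos_traj //.
apply: le_trans (ler_vnormD _ _) _; rewrite !vnormZ.
have gap_pos := gap_gt0 n_gt0 k_le_n.
have [x_gt0 y_gt0] := (bX_gt0 k, bX_gt0 (n - k)).
have [x_le1 y_le1] := (bX_le1 k, bX_le1 (n - k)).
apply: lerD.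
  rewrite -[leRHS]mul1r; apply: ler_wpM2r; first exact: vnorm_ge0.
  by apply: norm_pos_coef_le1; rewrite ?one_sub_bX_le_rho.
rewrite normrM (gtr0_norm kap_gt0); apply: ler_wpM2r; first exact: vnorm_ge0.
rewrite ler_pM2l //.
rewrite -(xy_eq k_le_n); apply: norm_vel_coef_le; rewrite ?one_sub_bX_le_rho //.
by rewrite xy_eq // exprn_ilt1 ?ltW // -lt0n.
Qed.

Lemma kap_le : kap <= gamma^-1.
Proof.
by rewrite /kap ler_pdivrMr ?subr_gt0 // ler_pdivlMl // mulrA gamma_h_a_le.
Qed.

Lemma kap_mul_le n :
  kap * (1 - b ^+ n) <= 2 * (h * n%:R / (2 + gamma * h * n%:R)).
Proof.
have den_gt0 : 0 < 2 + gamma * h * n%:R by rewrite ltr_wpDr.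
apply: le_trans (ler_wpM2r _ kap_le) _; first by rewrite subr_ge0.
rewrite (_ : 2 * _ = gamma^-1 * (2 * (gamma * h * n%:R) / (2 + gamma * h * n%:R))).
  by rewrite ler_pM2l ?invr_gt0 // ler_pdivlMr //; have := one_sub_bX_le n; nra.
by field; rewrite !lt0r_neq0.
Qed.

Lemma upos_bound_le n (Dz : 'cV[R]_(d + d)) :
  vnorm (upos Dz) + kap * (1 - b ^+ n) * vnorm (wvel Dz)
    <= 2 * (1 + h * n%:R / (2 + gamma * h * n%:R)) * vnorm Dz.
Proof.
have := kap_mul_le n; have := vnorm_upos_le Dz; have := vnorm_wvel_le Dz.
have : 0 <= kap * (1 - b ^+ n) by rewrite mulr_ge0 ?subr_ge0 // ltW.
have : 0 <= h * n%:R / (2 + gamma * h * n%:R).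
  by rewrite divr_ge0 ?addr_ge0 // mulr_ge0 // ltW.
have := vnorm_ge0 Dz; have := vnorm_ge0 (wvel Dz); nra.
Qed.

End PositionBound.

Theorem mainTheorem9 (R : realType) (d : nat) (gamma h : R)
  (z zt : 'cV[R]_(d + d)) (n : nat) :
  0 < gamma -> 0 < h -> (1 <= n)%N ->
  let Dz := zt - z in
  forall k : nat, (k <= n)%N ->
    vnorm (upos (traj gamma h n Dz k))
      <= vnorm (upos Dz)
         + h * expR (- gamma * h / 2) / (1 - expR (- gamma * h))
           * (1 - expR (- gamma * h * n%:R)) * vnorm (wvel Dz)
    /\
    vnorm (upos Dz)
         + h * expR (- gamma * h / 2) / (1 - expR (- gamma * h))
           * (1 - expR (- gamma * h * n%:R)) * vnorm (wvel Dz)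
      <= 2 * (1 + h * n%:R / (2 + gamma * h * n%:R)) * vnorm Dz.
Proof.
move=> gamma_gt0 h_gt0 n_gt0 Dz k k_le_n.
rewrite expRM_natr expR_gamma_h.
by split; [exact: upos_traj_le | exact: upos_bound_le].
Qed.
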